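(* Let $R$ be a Noetherian commutative ring and $I_1,I_2,I_3\subset R$ ideals; put $J=I_1+I_2+I_3$. Let $k_1,\dots,k_n$ generate $I_3$, let $A=R[x_1,\dots,x_n]$, and let $\pi_1:A\to R/I_1$, $\pi_2:A\to R/I_2$ be the $R$-algebra homomorphisms with $\pi_1(x_j)=k_j$ and $\pi_2(x_j)=0$ for all $j$. Then the pullback (fiber product) in commutative rings of the diagram $R/I_1\to R/J\leftarrow R/I_2$ (natural projections) is isomorphic to $A/(\ker\pi_1\cap\ker\pi_2)$. In particular this pullback is a finitely generated $R$-algebra. *)

From HB Require Import structures.
From mathcomp Require Import all_boot all_algebra.
From mathcomp Require Import boolp.
From mathcomp Require Import mpoly.
From mathcomp Require Import ring.

Set Implicit Arguments.
Unset Strict Implicit.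
Unset Printing Implicit Defensive.

Import GRing.Theory.
Local Open Scope ring_scope.
Local Open Scope quotient_scope.

Section Ideals.
Variable R : comPzRingType.

Definition is_ideal (I : R -> Prop) : Prop :=
  [/\ I 0, (forall x y, I x -> I y -> I (x + y)) & (forall r x, I x -> I (r * x))].

Record ideal := Ideal { ideal_mem :> R -> Prop; idealP : is_ideal ideal_mem }.

Lemma ideal0 (I : ideal) : I 0. Proof. by case: I => m; rewrite /is_ideal /=; case. Qed.
Lemma idealD (I : ideal) x y : I x -> I y -> I (x + y).
Proof. by case: I => m; rewrite /is_ideal /=; case=> _ H _; apply: H. Qed.
Lemma idealM (I : ideal) r x : I x -> I (r * x).
Proof. by case: I => m; rewrite /is_ideal /=; case=> _ _ H; apply: H. Qed.
Lemma idealN (I : ideal) x : I x -> I (- x).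
Proof. by move=> Ix; rewrite -mulN1r; apply: idealM. Qed.
Lemma idealB (I : ideal) x y : I x -> I y -> I (x - y).
Proof. by move=> Ix Iy; apply: idealD => //; apply: idealN. Qed.

Definition ideal_gen n (k : 'I_n -> R) : R -> Prop :=
  fun z => exists c : 'I_n -> R, z = \sum_(i < n) c i * k i.

Definition noetherian : Prop :=
  forall I : R -> Prop, is_ideal I ->
    exists n (k : 'I_n -> R), forall z, I z <-> ideal_gen k z.

Definition ideal_add_mem (I J : ideal) : R -> Prop :=
  fun z => exists x y, [/\ I x, J y & z = x + y].

Lemma ideal_add_is_ideal (I J : ideal) : is_ideal (ideal_add_mem I J).
Proof.
split.
- by exists 0, 0; rewrite addr0; split => //; apply: ideal0.
- move=> _ _ [x [y [Ix Jy ->]]] [x' [y' [Ix' Jy' ->]]].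
  exists (x + x'), (y + y'); split; try by apply: idealD.
  by rewrite addrACA.
- move=> r _ [x [y [Ix Jy ->]]]; exists (r * x), (r * y).
  by split; [apply: idealM|apply: idealM|rewrite mulrDr].
Qed.

Definition ideal_add (I J : ideal) : ideal := Ideal (ideal_add_is_ideal I J).

Lemma ideal_cap_is_ideal (I J : ideal) : is_ideal (fun z => I z /\ J z).
Proof.
split; first by split; apply: ideal0.
- by move=> x y [? ?] [? ?]; split; apply: idealD.
- by move=> r x [? ?]; split; apply: idealM.
Qed.

Definition ideal_cap (I J : ideal) : ideal := Ideal (ideal_cap_is_ideal I J).

End Ideals.

Section Kernel.
Variables (A : comPzRingType) (B : pzRingType) (f : {rmorphism A -> B}).

Lemma rker_is_ideal : is_ideal (fun x => f x = 0).
Proof.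
split; first by rewrite rmorph0.
- by move=> x y fx fy; rewrite rmorphD fx fy addr0.
- by move=> r x fx; rewrite rmorphM fx mulr0.
Qed.

Definition rker : ideal A := Ideal rker_is_ideal.
End Kernel.

Section Quot.
Variables (R : comPzRingType) (I : ideal R).

Definition qequiv (x y : R) : bool := `[< I (x - y) >].

Lemma qequivE x y : qequiv x y = I (x - y) :> Prop.
Proof. by rewrite /qequiv asboolE. Qed.

Lemma qequiv_is_equiv : equiv_class_of qequiv.
Proof.
split=> [x|x y|y x z].
- by apply/asboolP; rewrite subrr; apply: ideal0.
- apply/asboolP/asboolP => H; rewrite -opprB; exact: idealN.
- move=> /asboolP Hxy /asboolP Hyz; apply/asboolP.
  by rewrite -[x](addrNK y) -addrA; apply: idealD.
Qed.

Canonical qequiv_equiv := EquivRelPack qequiv_is_equiv.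
Canonical qequiv_encModRel := defaultEncModRel qequiv.

Definition quot := {eq_quot qequiv}.

HB.instance Definition _ : EqQuotient R qequiv quot := EqQuotient.on quot.
HB.instance Definition _ := Choice.on quot.

Lemma eqquotP x y : I (x - y) -> \pi_quot x = \pi_quot y.
Proof. by move=> H; apply/eqP; rewrite piE; apply/asboolP. Qed.

Lemma eqquotE x y : \pi_quot x = \pi_quot y -> I (x - y).
Proof. by move/eqP; rewrite piE => /asboolP. Qed.

Lemma reprI x : I (repr (\pi_quot x) - x).
Proof. by apply: eqquotE; rewrite reprK. Qed.

Definition qzero : quot := \pi_quot 0.
Definition qadd (a b : quot) : quot := \pi_quot (repr a + repr b).
Definition qopp (a : quot) : quot := \pi_quot (- repr a).
Definition qone : quot := \pi_quot 1.
Definition qmul (a b : quot) : quot := \pi_quot (repr a * repr b).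

Lemma pi_add x y : \pi_quot (x + y) = qadd (\pi_quot x) (\pi_quot y).
Proof.
apply: eqquotP; set a := repr _; set b := repr _.
have -> : x + y - (a + b) = - ((a - x) + (b - y)) by ring.
by apply: idealN; apply: idealD; apply: reprI.
Qed.

Lemma pi_opp x : \pi_quot (- x) = qopp (\pi_quot x).
Proof.
apply: eqquotP; set a := repr _.
have -> : - x - - a = a - x by ring.
by apply: reprI.
Qed.

Lemma pi_mul x y : \pi_quot (x * y) = qmul (\pi_quot x) (\pi_quot y).
Proof.
apply: eqquotP; set a := repr _; set b := repr _.
have -> : x * y - a * b = - ((a - x) * b + x * (b - y)) by ring.
apply: idealN; apply: idealD; first by rewrite mulrC; apply: idealM; apply: reprI.
by apply: idealM; apply: reprI.
Qed.

Lemma quot_ind (P : quot -> Prop) : (forall x, P (\pi_quot x)) -> forall a, P a.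
Proof. by move=> H a; rewrite -[a]reprK; apply: H. Qed.

Lemma addqA : associative qadd.
Proof.
by elim/quot_ind => x; elim/quot_ind => y; elim/quot_ind => z;
  rewrite -!pi_add addrA.
Qed.
Lemma addqC : commutative qadd.
Proof. by elim/quot_ind => x; elim/quot_ind => y; rewrite -!pi_add addrC. Qed.
Lemma add0q : left_id qzero qadd.
Proof. by elim/quot_ind => x; rewrite /qzero -pi_add add0r. Qed.
Lemma addNq : left_inverse qzero qopp qadd.
Proof. by elim/quot_ind => x; rewrite -pi_opp -pi_add addNr. Qed.

HB.instance Definition _ := GRing.isZmodule.Build quot addqA addqC add0q addNq.

Lemma mulqA : associative qmul.
Proof.
by elim/quot_ind => x; elim/quot_ind => y; elim/quot_ind => z;
  rewrite -!pi_mul mulrA.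
Qed.
Lemma mulqC : commutative qmul.
Proof. by elim/quot_ind => x; elim/quot_ind => y; rewrite -!pi_mul mulrC. Qed.
Lemma mul1q : left_id qone qmul.
Proof. by elim/quot_ind => x; rewrite /qone -pi_mul mul1r. Qed.
Lemma mulqDl : left_distributive qmul (@GRing.add quot).
Proof.
elim/quot_ind => x; elim/quot_ind => y; elim/quot_ind => z.
have E (a b : quot) : a + b = qadd a b by [].
by rewrite !E -(pi_add x y) -(pi_mul x z) -(pi_mul y z) -pi_add -pi_mul mulrDl.
Qed.

HB.instance Definition _ := GRing.Zmodule_isComPzRing.Build quot
  mulqA mulqC mul1q mulqDl.

Definition qpi (x : R) : quot := \pi_quot x.

Lemma qpi_is_zmod_morphism : zmod_morphism qpi.
Proof. by move=> x y; rewrite /qpi pi_add pi_opp. Qed.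
Lemma qpi_is_monoid_morphism : monoid_morphism qpi.
Proof. by split=> // x y; rewrite /qpi pi_mul. Qed.

HB.instance Definition _ := GRing.isZmodMorphism.Build R quot qpi
  qpi_is_zmod_morphism.
HB.instance Definition _ := GRing.isMonoidMorphism.Build R quot qpi
  qpi_is_monoid_morphism.


End Quot.



Section QProj.
Variables (R : comPzRingType) (I J : ideal R) (hIJ : forall x, I x -> J x).

Definition qproj_fun of (forall x, I x -> J x) := fun a : quot I => qpi J (repr a).
Definition qproj := qproj_fun hIJ.

Lemma qproj_qpi x : qproj (qpi I x) = qpi J x.
Proof.
apply: eqquotP; apply: hIJ; exact: reprI.
Qed.

Lemma qproj_is_zmod_morphism : zmod_morphism qproj.
Proof.
elim/quot_ind => x; elim/quot_ind => y.
by rewrite -!/(qpi _ _) -rmorphB !qproj_qpi rmorphB.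
Qed.
Lemma qproj_is_monoid_morphism : monoid_morphism qproj.
Proof.
split; first by rewrite -(rmorph1 (qpi I)) qproj_qpi rmorph1.
elim/quot_ind => x; elim/quot_ind => y.
by rewrite -!/(qpi _ _) -rmorphM !qproj_qpi rmorphM.
Qed.

HB.instance Definition _ := GRing.isZmodMorphism.Build (quot I) (quot J) qproj
  qproj_is_zmod_morphism.
HB.instance Definition _ := GRing.isMonoidMorphism.Build (quot I) (quot J) qproj
  qproj_is_monoid_morphism.
End QProj.

Section Pullback.
Variables (S1 S2 T : comPzRingType) (f1 : {rmorphism S1 -> T})
  (f2 : {rmorphism S2 -> T}).

Definition pbP : pred (S1 * S2)%type := fun x => f1 x.1 == f2 x.2.

Record pullback := Pullback { pbval :> (S1 * S2)%type; _ : pbP pbval }.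

HB.instance Definition _ := [isSub for pbval].
HB.instance Definition _ := [Choice of pullback by <:].

Lemma pb_subring_closed : subring_closed pbP.
Proof.
split; first by rewrite unfold_in /pbP /= !rmorph1.
- by move=> x y; rewrite !unfold_in /pbP /= => /eqP hx /eqP hy; rewrite !rmorphB hx hy.
- by move=> x y; rewrite !unfold_in /pbP /= => /eqP hx /eqP hy; rewrite !rmorphM hx hy.
Qed.

HB.instance Definition _ := GRing.SubChoice_isSubComPzRing.Build
  (S1 * S2)%type pbP pullback pb_subring_closed.
End Pullback.

(* Finitely generated R-algebras: B with structure map phi : R -> B is *)
(* finitely generated iff some R-algebra morphism R[x_1..x_m] -> B     *)
(* (i.e. ring morphism restricting to phi on constants) is onto.       *)
Definition fg_algebra (R : comNzRingType) (B : pzRingType)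
  (phi : {rmorphism R -> B}) : Prop :=
  exists m (g : {rmorphism {mpoly R[m]} -> B}),
    (forall b : B, exists p, g p = b) /\ forall r : R, g r%:MP = phi r.

Section Setting.
Variable R : comNzRingType.

Lemma ideal_add3_1 (I1 I2 I3 : ideal R) x :
  I1 x -> ideal_add (ideal_add I1 I2) I3 x.
Proof.
by move=> H; exists x, 0; rewrite addr0; split=> //;
  [exists x, 0; rewrite addr0; split=> //; apply: ideal0 | apply: ideal0].
Qed.

Lemma ideal_add3_2 (I1 I2 I3 : ideal R) x :
  I2 x -> ideal_add (ideal_add I1 I2) I3 x.
Proof.
by move=> H; exists x, 0; rewrite addr0; split=> //;
  [exists 0, x; rewrite add0r; split=> //; apply: ideal0 | apply: ideal0].
Qed.

(* R/I1 x_{R/J} R/I2, J = I1 + I2 + I3 *)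
Definition quot_pullback (I1 I2 I3 : ideal R) :=
  pullback (qproj (@ideal_add3_1 I1 I2 I3)) (qproj (@ideal_add3_2 I1 I2 I3)).

Definition qpb_alg_fun (I1 I2 I3 : ideal R) (r : R) : quot_pullback I1 I2 I3.
Proof.
refine (@Pullback _ _ _ _ _ (qpi I1 r, qpi I2 r) _).
by rewrite /pbP /= !qproj_qpi.
Defined.

Lemma qpb_alg_is_zmod_morphism I1 I2 I3 : zmod_morphism (qpb_alg_fun I1 I2 I3).
Proof. by move=> x y; apply: val_inj; rewrite /= !rmorphB. Qed.
Lemma qpb_alg_is_monoid_morphism I1 I2 I3 :
  monoid_morphism (qpb_alg_fun I1 I2 I3).
Proof.
by split; [apply: val_inj; rewrite /= !rmorph1 | move=> x y;
  apply: val_inj; rewrite /= !rmorphM].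
Qed.

HB.instance Definition _ I1 I2 I3 :=
  GRing.isZmodMorphism.Build R (quot_pullback I1 I2 I3) (qpb_alg_fun I1 I2 I3)
  (qpb_alg_is_zmod_morphism I1 I2 I3).
HB.instance Definition _ I1 I2 I3 :=
  GRing.isMonoidMorphism.Build R (quot_pullback I1 I2 I3) (qpb_alg_fun I1 I2 I3)
  (qpb_alg_is_monoid_morphism I1 I2 I3).

Definition qpb_alg (I1 I2 I3 : ideal R) : {rmorphism R -> quot_pullback I1 I2 I3} :=
  qpb_alg_fun I1 I2 I3.

Definition eval_quot (n : nat) (I : ideal R) (v : 'I_n -> R)
  (p : {mpoly R[n]}) : quot I := qpi I (p.@[v]).

HB.instance Definition _ n I v :=
  GRing.RMorphism.copy (@eval_quot n I v) (qpi I \o meval v).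

End Setting.

From Pilot Require Import Defs.
From HB Require Import structures.
From mathcomp Require Import all_boot all_algebra.
From mathcomp Require Import boolp.
From mathcomp Require Import mpoly.
From mathcomp Require Import ring.

Set Implicit Arguments.
Unset Strict Implicit.
Unset Printing Implicit Defensive.

Import GRing.Theory.
Local Open Scope ring_scope.
Local Open Scope quotient_scope.

(** The map [p |-> (p(k) mod I1, p(0) mod I2)] lands in the pullback because
   [p(k) - p(0)] lies in [I3], and its kernel is [ker pi1 /\ ker pi2] by
   definition, so the first isomorphism theorem reduces everything to its
   surjectivity.  Given [(r1 mod I1, r2 mod I2)] in the pullback, write
   [r1 - r2 = i1 + i2 + sum_j c_j k_j] with [i1 in I1], [i2 in I2]; then the
   polynomial [r2 + i2 + sum_j c_j x_j] is a preimage. *)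

Lemma ideal_gen_generator (R : comPzRingType) n (k : 'I_n -> R) i :
  ideal_gen k (k i).
Proof.
exists (fun j => (j == i)%:R).
by rewrite (bigD1 i) //= eqxx mul1r big1 ?addr0 // => j /negPf ->; rewrite mul0r.
Qed.

Lemma ideal_addr (R : comPzRingType) (I J : ideal R) y :
  J y -> ideal_add I J y.
Proof. by move=> Jy; exists 0, y; rewrite add0r; split=> //; apply: ideal0. Qed.

Lemma qproj_qpi_eq (R : comPzRingType) (I1 I2 J : ideal R)
    (h1 : forall x, I1 x -> J x) (h2 : forall x, I2 x -> J x) x y :
  qproj h1 (qpi I1 x) = qproj h2 (qpi I2 y) <-> J (x - y).
Proof.
rewrite !qproj_qpi; split; first exact: Defs.eqquotE.
exact: Defs.eqquotP.
Qed.

Lemma meval_sub_ideal (R : comNzRingType) (I : ideal R) n (v w : 'I_n -> R)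
    (p : {mpoly R[n]}) :
  (forall i, I (v i - w i)) -> I (p.@[v] - p.@[w]).
Proof.
move=> Ivw; apply: Defs.eqquotE; rewrite !mevalE.
rewrite -!/(qpi _ _) !rmorph_sum; apply: eq_bigr => m _.
rewrite !rmorphM !rmorph_prod; congr (_ * _); apply: eq_bigr => i _.
by rewrite !rmorphXn; congr (_ ^+ _); apply: Defs.eqquotP.
Qed.

Section QuotLift.
Variables (A : comPzRingType) (B : pzRingType) (I : ideal A).
Variable f : {rmorphism A -> B}.
Hypothesis fI : forall x, I x -> f x = 0.

(* [fI] is an argument so that the ring-morphism instance, which needs it,
   is found by unification on [quot_lift fI]. *)
Definition quot_lift_fun of (forall x, I x -> f x = 0) :=
  fun a : quot I => f (repr a).
Definition quot_lift := quot_lift_fun fI.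

Lemma quot_lift_qpi x : quot_lift (qpi I x) = f x.
Proof. by apply/eqP; rewrite -subr_eq0 -rmorphB fI //; apply: reprI. Qed.

Lemma quot_lift_is_zmod_morphism : zmod_morphism quot_lift.
Proof.
elim/quot_ind => x; elim/quot_ind => y.
by rewrite -!/(qpi _ _) -rmorphB !quot_lift_qpi rmorphB.
Qed.

Lemma quot_lift_is_monoid_morphism : monoid_morphism quot_lift.
Proof.
split; first by rewrite -(rmorph1 (qpi I)) quot_lift_qpi rmorph1.
elim/quot_ind => x; elim/quot_ind => y.
by rewrite -!/(qpi _ _) -rmorphM !quot_lift_qpi rmorphM.
Qed.

HB.instance Definition _ := GRing.isZmodMorphism.Build _ _ quot_lift
  quot_lift_is_zmod_morphism.
HB.instance Definition _ := GRing.isMonoidMorphism.Build _ _ quot_lift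
  quot_lift_is_monoid_morphism.

Hypothesis kerf : forall x, f x = 0 -> I x.

Lemma quot_lift_inj : injective quot_lift.
Proof.
elim/quot_ind => x; elim/quot_ind => y; rewrite -!/(qpi _ _) !quot_lift_qpi.
by move=> fxy; apply: Defs.eqquotP; apply: kerf; rewrite rmorphB fxy subrr.
Qed.

Lemma quot_lift_bij : (forall b, exists x, f x = b) -> bijective quot_lift.
Proof.
move=> f_onto; pose g b := qpi I (projT1 (cid (f_onto b))).
have quot_liftK : cancel g quot_lift.
  by move=> b; rewrite quot_lift_qpi (projT2 (cid (f_onto b))).
by exists g => // a; apply: quot_lift_inj; rewrite quot_liftK.
Qed.

End QuotLift.

Section PullbackPair.
Variables (A : pzRingType) (S1 S2 T : comPzRingType).
Variables (f1 : {rmorphism S1 -> T}) (f2 : {rmorphism S2 -> T}).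
Variables (g1 : {rmorphism A -> S1}) (g2 : {rmorphism A -> S2}).
Hypothesis fg : forall x, f1 (g1 x) = f2 (g2 x).

Definition pb_pair (x : A) : pullback f1 f2 :=
  @Pullback _ _ _ f1 f2 (g1 x, g2 x) (introT eqP (fg x)).

Lemma pb_pair_is_zmod_morphism : zmod_morphism pb_pair.
Proof. by move=> x y; apply: val_inj; rewrite /= !rmorphB. Qed.

Lemma pb_pair_is_monoid_morphism : monoid_morphism pb_pair.
Proof.
split; first by apply: val_inj; rewrite /= !rmorph1.
by move=> x y; apply: val_inj; rewrite /= !rmorphM.
Qed.

HB.instance Definition _ := GRing.isZmodMorphism.Build _ _ pb_pair
  pb_pair_is_zmod_morphism.
HB.instance Definition _ := GRing.isMonoidMorphism.Build _ _ pb_pair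
  pb_pair_is_monoid_morphism.

Lemma pb_pair_eq0 x : pb_pair x = 0 <-> g1 x = 0 /\ g2 x = 0.
Proof.
split=> [/(congr1 val) [-> ->] // | [e1 e2]].
by apply: val_inj; rewrite /= e1 e2.
Qed.

End PullbackPair.

Section PullbackPresentation.
Variables (R : comNzRingType) (I1 I2 I3 : ideal R) (n : nat) (k : 'I_n -> R).
Hypothesis hk : forall z, I3 z <-> ideal_gen k z.

Local Notation pi1 := (eval_quot I1 k).
Local Notation pi2 := (eval_quot I2 (fun _ : 'I_n => 0)).

Lemma eval_quot_compat p :
  qproj (@ideal_add3_1 _ I1 I2 I3) (pi1 p) =
  qproj (@ideal_add3_2 _ I1 I2 I3) (pi2 p).
Proof.
apply/qproj_qpi_eq/ideal_addr/meval_sub_ideal => i.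
by rewrite subr0; apply/hk/ideal_gen_generator.
Qed.

Definition eval_pullback : {rmorphism {mpoly R[n]} -> quot_pullback I1 I2 I3} :=
  pb_pair eval_quot_compat.

Lemma eval_pullback_onto b : exists p, eval_pullback p = b.
Proof.
case: b => [[a1 a2]]; elim/quot_ind: a1 => r1; elim/quot_ind: a2 => r2.
move=> hb; have /qproj_qpi_eq [x [y [[i1 [i2 [h1 h2 ->]]] I3y e]]] := eqP hb.
move/hk: I3y e => [c ->] e.
exists ((r2 + i2)%:MP + \sum_(j < n) c j *: 'X_j).
apply: val_inj; congr (_, _); rewrite /= /eval_quot mevalD mevalC;
  apply: Defs.eqquotP; rewrite (big_morph _ (mevalD _) (meval0 _)).
- under eq_bigr do rewrite mevalZ mevalXU.
  have -> : r2 + i2 + \sum_(j < n) c j * k j - r1 = - i1.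
    by rewrite -[r1](subrK r2) e; ring.
  exact: idealN.
- rewrite big1 => [|j _]; last by rewrite mevalZ mevalXU mulr0.
  by rewrite addr0 addrAC subrr add0r.
Qed.

Lemma eval_pullback_C r : eval_pullback r%:MP = qpb_alg I1 I2 I3 r.
Proof. by apply: val_inj; rewrite /= /eval_quot !mevalC. Qed.

End PullbackPresentation.

Theorem lemma2p6 (R : comNzRingType) (noethR : noetherian R)
    (I1 I2 I3 : ideal R) (n : nat) (k : 'I_n -> R)
    (hk : forall z, I3 z <-> ideal_gen k z) :
  (exists f : {rmorphism
                 quot (ideal_cap (rker (eval_quot I1 k))
                                 (rker (eval_quot I2 (fun _ : 'I_n => 0))))
                 -> quot_pullback I1 I2 I3},
      bijective f)
  /\ fg_algebra (qpb_alg I1 I2 I3).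
Proof.
pose Phi := eval_pullback I1 I2 hk.
pose K := ideal_cap (rker (eval_quot I1 k)) (rker (eval_quot I2 (fun=> 0))).
have kerPhi p : Phi p = 0 <-> K p by exact: pb_pair_eq0.
split.
- exists (quot_lift (fun p => proj2 (kerPhi p))).
  apply: quot_lift_bij => [p /kerPhi //|]; exact: eval_pullback_onto.
- exists n, Phi; split; [exact: eval_pullback_onto | exact: eval_pullback_C].
Qed.
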